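(* Let $q\ge1$. For every closed planar $C^2$ curve $\bm\gamma$ it holds that $$\int_{\bm\gamma}|\kappa_{\bm\gamma}|^q\,d\mathcal H^1\ge(\mathrm{diam}\,\bm\gamma)^{1-q},$$ where $\kappa_{\bm\gamma}$ denotes the curvature of $\bm\gamma$. *)

From HB Require Import structures.
From mathcomp Require Import all_boot all_order all_algebra.
From mathcomp Require Import all_classical all_reals all_analysis.
Set Implicit Arguments. Unset Strict Implicit. Unset Printing Implicit Defensive.
Import Order.TTheory GRing.Theory Num.Theory.
Import numFieldNormedType.Exports.
Local Open Scope classical_set_scope.
Local Open Scope ring_scope.

Definition speed (R : realType) (x y : R -> R) (t : R) : R :=
  Num.sqrt (derive1 x t ^+ 2 + derive1 y t ^+ 2).

Definition curvature (R : realType) (x y : R -> R) (t : R) : R :=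
  (derive1 x t * derive1n 2 y t - derive1 y t * derive1n 2 x t)
    / speed x y t ^+ 3.

Definition curve_dist (R : realType) (x y : R -> R) (s t : R) : R :=
  Num.sqrt ((x s - x t) ^+ 2 + (y s - y t) ^+ 2).

Definition curve_diam (R : realType) (x y : R -> R) : R :=
  sup [set d | exists s t, d = curve_dist x y s t].

(* gamma = (x,y) is a closed regular C^2 planar curve, parametrized
   T-periodically (one period [0,T] traces the closed curve once). *)
Definition closed_regular_C2_curve (R : realType) (x y : R -> R) (T : R) : Prop :=
  0 < T /\
  (forall t, x (t + T) = x t /\ y (t + T) = y t) /\
  (forall t, derivable x t 1 /\ derivable y t 1) /\
  (forall t, derivable (derive1 x) t 1 /\ derivable (derive1 y) t 1) /\
  (continuous (derive1n 2 x) /\ continuous (derive1n 2 y)) /\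
  (forall t, derive1 x t ^+ 2 + derive1 y t ^+ 2 != 0).

(* int_gamma |kappa|^q dH^1  (arclength integral over one period). *)
Definition curvature_energy (R : realType) (x y : R -> R) (T q : R) : \bar R :=
  let D : set R := `[(0:R), T]%classic in
  (\int[lebesgue_measure]_(t in D) ((powR `|curvature x y t| q) * speed x y t)%:E)%E.

(* The unit tangent e of the curve turns at rate |kappa| |gamma'|, so |e t - e m| is at most
   the total curvature K accumulated between m and t.  Projecting an arc of total curvature
   theta onto the tangent at its curvature midpoint shows that its chord is at least
   (1 - theta^2/8) times its length.  A closed curve has a zero chord over one period, hence
   total curvature at least 2 sqrt 2, so it contains an arc of total curvature 13/10, whose
   length L is at most 800/631 times its chord, hence at most 800/631 diam gamma.  Integrating
   the tangent-line bound |kappa|^q >= d^(1-q) (q |kappa| - (q - 1)/d) with d = diam gamma over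
   this arc gives an energy at least d^(1-q) (13 q / 10 - (q - 1) L / d) >= d^(1-q). *)

From HB Require Import structures.
From mathcomp Require Import all_boot all_order all_algebra.
From mathcomp Require Import all_classical all_reals all_analysis.
From mathcomp Require Import measurable_realfun.
From mathcomp Require Import ring lra.
Import Order.TTheory GRing.Theory Num.Theory.
Import numFieldNormedType.Exports.
Local Open Scope classical_set_scope.
Local Open Scope ring_scope.

Section RealCalculus.
Context {R : realType}.
Implicit Types (f g F df dg : R -> R) (a b : R).

Lemma is_derive1 {f} {t : R} : derivable f t 1 -> is_derive t 1 f (derive1 f t).
Proof. by move=> df; rewrite derive1E; apply: derivableP. Qed.

Lemma derivable1_continuous {f} {t : R} :
  derivable f t 1 -> {for t, continuous f}.
Proof. by move=> df; apply/differentiable_continuous/derivable1_diffP. Qed.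

Lemma is_derive_ge0_le f df a b : a <= b ->
  (forall z, a <= z <= b -> is_derive z 1 f (df z)) ->
  (forall z, a < z < b -> 0 <= df z) -> f a <= f b.
Proof.
move=> ab fdf df_ge0.
have fdf_oo z : z \in `]a, b[ -> is_derive z 1 f (df z).
  by rewrite in_itv => /andP[az zb]; apply: fdf; rewrite !ltW.
apply: (@ger0_derive1_le_cc _ f a b).
- by move=> z /fdf_oo [].
- move=> z zab; rewrite derive1E; case: (fdf_oo z zab) => _ ->.
  by apply: df_ge0; rewrite in_itv in zab.
- by apply: derivable_within_continuous => z; rewrite in_itv => /fdf [].
- by rewrite in_itv /= lexx ab.
- by rewrite in_itv /= lexx ab.
- exact: ab.
Qed.

Lemma is_derive_gt0_lt f df a b : a < b ->
  (forall z, a <= z <= b -> is_derive z 1 f (df z)) ->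
  (forall z, a < z < b -> 0 < df z) -> f a < f b.
Proof.
move=> ab fdf df_gt0.
have fdf_oo z : z \in `]a, b[ -> is_derive z 1 f (df z).
  by rewrite in_itv => /andP[az zb]; apply: fdf; rewrite !ltW.
apply: (@gtr0_derive1_lt_cc _ f a b).
- by move=> z /fdf_oo [].
- move=> z zab; rewrite derive1E; case: (fdf_oo z zab) => _ ->.
  by apply: df_gt0; rewrite in_itv in zab.
- by apply: derivable_within_continuous => z; rewrite in_itv => /fdf [].
- by rewrite in_itv /= lexx ltW.
- by rewrite in_itv /= lexx ltW.
- exact: ab.
Qed.

Lemma ler_normB_is_derive f g df dg a b : a <= b ->
  (forall z, a <= z <= b -> is_derive z 1 f (df z)) ->
  (forall z, a <= z <= b -> is_derive z 1 g (dg z)) ->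
  (forall z, a < z < b -> `|df z| <= dg z) ->
  `|f b - f a| <= g b - g a.
Proof.
move=> ab fdf gdg dfg.
have gBf : g a - f a <= g b - f b.
  apply: (@is_derive_ge0_le (g - f) (dg - df)) => // [z zab|z zab].
    exact: is_deriveB (gdg z zab) (fdf z zab).
  by rewrite !fctE subr_ge0 (le_trans (ler_norm _)) ?dfg.
have gDf : g a + f a <= g b + f b.
  apply: (@is_derive_ge0_le (g + f) (dg + df)) => // [z zab|z zab].
    exact: is_deriveD (gdg z zab) (fdf z zab).
  by rewrite !fctE -lerBlDr sub0r (le_trans _ (dfg z zab)) // -normrN ler_norm.
by rewrite ler_norml; apply/andP; split; lra.
Qed.

Lemma is_derive_div {f g} {t a b : R} : g t != 0 ->
  is_derive t 1 f a -> is_derive t 1 g b ->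
  is_derive t 1 (fun z => f z / g z) ((a * g t - f t * b) / g t ^+ 2).
Proof.
move=> g_neq0 fa gb; apply: is_derive_eq (is_deriveM fa (is_deriveV g_neq0 gb)) _.
by rewrite /GRing.scale /=; field.
Qed.

(* Integrating from [a - 1] makes [F] differentiable on both sides of [a]. *)
Lemma continuous_primitive f a : continuous f ->
  exists F, forall t, a <= t -> is_derive t 1 F (f t).
Proof.
move=> cf; exists (fun t => Rintegral lebesgue_measure `[a - 1, t] f) => t ta.
have f_int : lebesgue_measure.-integrable `[a - 1, t + 1] (EFin \o f).
  apply: continuous_compact_integrable; first exact: segment_compact.
  exact: continuous_subspaceT.
have t_lt : t < t + 1 by rewrite ltrDl.
have [|dF <-] := continuous_FTC1_closed t_lt f_int _ (cf t); first lra.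
by rewrite derive1E; apply: derivableP.
Qed.

Lemma integral_primitive f F a b : a < b -> continuous f ->
  (forall t, a <= t <= b -> is_derive t 1 F (f t)) ->
  (\int[lebesgue_measure]_(t in `[a, b]) (f t)%:E = (F b - F a)%:E)%E.
Proof.
move=> ab cf Ff; have cF t : a <= t <= b -> {for t, continuous F}.
  by move=> /Ff [dF _]; apply/differentiable_continuous/derivable1_diffP.
rewrite EFinB (@continuous_FTC2 _ f F a b ab) //.
- exact: continuous_subspaceT.
- split.
  + by move=> z; rewrite in_itv /= => /andP[az zb]; case: (Ff z); rewrite ?ltW.
  + by apply: cvg_at_right_filter; apply: cF; rewrite lexx ltW.
  + by apply: cvg_at_left_filter; apply: cF; rewrite lexx ltW.
- move=> z; rewrite in_itv /= => /andP[az zb].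
  by rewrite derive1E; case: (Ff z) => [|_ ->//]; rewrite !ltW.
Qed.

End RealCalculus.

Lemma powR_ge_tangent {R : realType} {a d q : R} : 0 <= a -> 0 < d -> 1 <= q ->
  d `^ (1 - q) * (q * a - (q - 1) / d) <= a `^ q.
Proof.
move=> a_ge0 d_gt0 q_ge1; have [->|q_neq1] := eqVneq q 1.
  by rewrite subrr powRr0 mul0r subr0 !mul1r powRr1.
have q_gt1 : 1 < q by rewrite lt_neqAle eq_sym q_neq1.
(* Young's inequality for the conjugate exponents [q] and [q / (q - 1)]. *)
pose q' := q / (q - 1).
have q'V : q'^-1 = (q - 1) / q by rewrite invf_div.
have q'_gt0 : 0 < q' by rewrite divr_gt0 ?subr_gt0 //; lra.
have conj_qq' : q^-1 + q'^-1 = 1 by rewrite q'V; field; rewrite gt_eqF //; lra.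
have := conjugate_powR a_ge0 (powR_ge0 d (1 - q)) (lt_le_trans ltr01 q_ge1) q'_gt0 conj_qq'.
have -> : d `^ (1 - q) `^ q' = d `^ (- q).
  by rewrite -powRrM; congr (_ `^ _); rewrite /q'; field; rewrite subr_eq0.
have -> : d `^ (1 - q) = d * d `^ (- q).
  by rewrite powRD ?(gt_eqF d_gt0) ?implybT // powRr1 // ltW.
move: (d `^ (- q)) (a `^ q) => P A young.
have /(ler_wpM2l (ltW (lt_trans ltr01 q_gt1))) : a * (d * P) <= A / q + P * q'^-1.
  exact: young.
have -> : q * (A / q + P * q'^-1) = A + (q - 1) * P.
  by rewrite q'V; field; rewrite gt_eqF //; lra.
have -> : d * P * (q * a - (q - 1) / d) = q * (a * (d * P)) - (q - 1) * P.
  by field; rewrite gt_eqF.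
lra.
Qed.

Lemma ler_norm_dot2 {R : realType} (a b c d : R) : c ^+ 2 + d ^+ 2 = 1 ->
  `|a * c + b * d| <= Num.sqrt (a ^+ 2 + b ^+ 2).
Proof.
move=> cd_unit; rewrite -sqrtr_sqr ler_sqrt ?addr_ge0 ?sqr_ge0 //.
have lagrange : (a ^+ 2 + b ^+ 2) * (c ^+ 2 + d ^+ 2) - (a * c + b * d) ^+ 2
    = (a * d - b * c) ^+ 2 by ring.
by rewrite -subr_ge0 -[X in X - _]mulr1 -cd_unit lagrange sqr_ge0.
Qed.

(* The supremum of a set without upper bound is [0]. *)
Lemma curve_diam0_or_ub {R : realType} (x y : R -> R) :
  curve_diam x y = 0 \/ forall s t, curve_dist x y s t <= curve_diam x y.
Proof.
have [ub|not_ub] := pselect (has_ubound [set d | exists s t, d = curve_dist x y s t]).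
  by right => s t; apply: (ub_le_sup ub); exists s, t.
by left; rewrite /curve_diam sup_out // => -[_].
Qed.

Definition tangent_x {R : realType} (x y : R -> R) (t : R) : R :=
  derive1 x t / speed x y t.
Definition tangent_y {R : realType} (x y : R -> R) (t : R) : R :=
  derive1 y t / speed x y t.

Section RegularCurve.
Context {R : realType} {x y : R -> R}.
Hypothesis dx : forall t, derivable x t 1.
Hypothesis dy : forall t, derivable y t 1.
Hypothesis ddx : forall t, derivable (derive1 x) t 1.
Hypothesis ddy : forall t, derivable (derive1 y) t 1.
Hypothesis cx2 : continuous (derive1n 2 x).
Hypothesis cy2 : continuous (derive1n 2 y).
Hypothesis regular : forall t, derive1 x t ^+ 2 + derive1 y t ^+ 2 != 0.

Local Notation x' := (derive1 x).
Local Notation y' := (derive1 y).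
Local Notation x'' := (derive1 x').
Local Notation y'' := (derive1 y').
Local Notation s := (speed x y).
Local Notation ex := (tangent_x x y).
Local Notation ey := (tangent_y x y).
Local Notation kappa := (curvature x y).

Lemma speed_gt0 (t : R) : 0 < s t.
Proof. by rewrite sqrtr_gt0 lt_def regular addr_ge0 ?sqr_ge0. Qed.

Lemma sqr_speed (t : R) : s t ^+ 2 = x' t ^+ 2 + y' t ^+ 2.
Proof. by rewrite sqr_sqrtr // addr_ge0 ?sqr_ge0. Qed.

Lemma is_derive_speed (t : R) :
  is_derive t 1 s ((x' t * x'' t + y' t * y'' t) / s t).
Proof.
pose sq := x' * x' + y' * y'.
have sqE : sq t = s t ^+ 2 by rewrite sqr_speed !expr2.
have sq_gt0 : 0 < sq t by rewrite sqE exprn_gt0 ?speed_gt0.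
have dsq : is_derive t 1 sq (2 * (x' t * x'' t + y' t * y'' t)).
  apply: is_derive_eq (is_deriveD (is_deriveM (is_derive1 (ddx t)) (is_derive1 (ddx t)))
                                  (is_deriveM (is_derive1 (ddy t)) (is_derive1 (ddy t)))) _.
  by move: (x' t) (x'' t) (y' t) (y'' t) => a b c d; rewrite /GRing.scale /=; ring.
have -> : s = Num.sqrt \o sq by apply/funext => z; rewrite /speed /= !expr2.
apply: is_derive_eq (@is_derive1_comp _ Num.sqrt sq t _ _ (is_derive1_sqrt sq_gt0) dsq) _.
rewrite /= sqE sqrtr_sqr gtr0_norm ?speed_gt0 //; have := speed_gt0 t.
by move: (s t) (x' t * x'' t + y' t * y'' t) => S P S_gt0; field; rewrite gt_eqF.
Qed.

Lemma continuous_speed : continuous s.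
Proof. by move=> t; case: (is_derive_speed t) => /derivable1_continuous. Qed.

Lemma curvatureE (t : R) : kappa t = (x' t * y'' t - y' t * x'' t) / s t ^+ 3.
Proof. by []. Qed.

Lemma continuous_curvature : continuous kappa.
Proof.
move=> t; have cx' z := derivable1_continuous (ddx z).
have cy' z := derivable1_continuous (ddy z).
have cs := continuous_speed t.
have s3_neq0 : s t ^+ 3 != 0 by rewrite expf_neq0 // gt_eqF // speed_gt0.
have := continuousM (continuousB (continuousM (cx' t) (cy2 t)) (continuousM (cy' t) (cx2 t)))
  (@continuousV _ _ (fun z => s z ^+ 3) t s3_neq0 (continuousM cs (continuousM cs cs))).
exact.
Qed.

Lemma tangent_unit (t : R) : ex t ^+ 2 + ey t ^+ 2 = 1.
Proof.
rewrite /tangent_x /tangent_y !expr_div_n -mulrDl -sqr_speed divff //.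
by rewrite expf_neq0 // gt_eqF // speed_gt0.
Qed.

Lemma is_derive_tangent_x (t : R) :
  is_derive t 1 ex (- (kappa t * s t * ey t)).
Proof.
have s_neq0 : s t != 0 by rewrite gt_eqF ?speed_gt0.
apply: is_derive_eq (is_derive_div s_neq0 (is_derive1 (ddx t)) (is_derive_speed t)) _.
rewrite curvatureE /tangent_y; have := sqr_speed t; move: s_neq0.
move: (s t) (x' t) (x'' t) (y' t) (y'' t) => S a b c d S_neq0 S2.
have -> : (b * S - a * ((a * b + c * d) / S)) / S ^+ 2
    = (b * S ^+ 2 - a * (a * b + c * d)) / S ^+ 3 by field.
by rewrite S2; field.
Qed.

Lemma is_derive_tangent_y (t : R) :
  is_derive t 1 ey (kappa t * s t * ex t).
Proof.
have s_neq0 : s t != 0 by rewrite gt_eqF ?speed_gt0.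
apply: is_derive_eq (is_derive_div s_neq0 (is_derive1 (ddy t)) (is_derive_speed t)) _.
rewrite curvatureE /tangent_x; have := sqr_speed t; move: s_neq0.
move: (s t) (x' t) (x'' t) (y' t) (y'' t) => S a b c d S_neq0 S2.
have -> : (d * S - c * ((a * b + c * d) / S)) / S ^+ 2
    = (d * S ^+ 2 - c * (a * b + c * d)) / S ^+ 3 by field.
by rewrite S2; field.
Qed.

Lemma is_derive_proj (w1 w2 t : R) :
  is_derive t 1 (fun z => w1 * x z + w2 * y z) (s t * (w1 * ex t + w2 * ey t)).
Proof.
have s_neq0 : s t != 0 by rewrite gt_eqF ?speed_gt0.
apply: is_derive_eq (is_deriveD (is_deriveZ w1 (is_derive1 (dx t)))
                                (is_deriveZ w2 (is_derive1 (dy t)))) _.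
rewrite /tangent_x /tangent_y; move: s_neq0.
by move: (s t) (x' t) (y' t) => S a c S_neq0; rewrite /GRing.scale /=; field.
Qed.

Lemma continuous_abs_curvature_speed : continuous (fun t => `|kappa t| * s t).
Proof.
move=> t; apply: continuousM (continuous_speed t).
exact: continuous_comp (continuous_curvature t) (@norm_continuous _ R _).
Qed.

Lemma measurable_curvature_energy_density (q : R) :
  measurable_fun setT (fun t => `|kappa t| `^ q * s t).
Proof.
apply: measurable_funM; last exact: continuous_measurable_fun continuous_speed.
apply: measurableT_comp (measurable_powR q) (continuous_measurable_fun _).
by move=> t; exact: continuous_comp (continuous_curvature t) (@norm_continuous _ R _).
Qed.

Lemma integral_curvature_pow_le_energy (q b T : R) : b <= T ->
  (\int[lebesgue_measure]_(t in `[0%R, b]) (`|kappa t| `^ q * s t)%:E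
    <= curvature_energy x y T q)%E.
Proof.
move=> bT; apply: ge0_subset_integral => //.
- by apply/measurable_EFinP; exact: measurable_funS (measurable_curvature_energy_density q).
- by move=> t _; rewrite lee_fin mulr_ge0 ?powR_ge0 // ltW // speed_gt0.
- by apply: subset_itv; rewrite bnd_simp.
Qed.

Lemma curvature_energy_ge0 (q T : R) : (0 <= curvature_energy x y T q)%E.
Proof.
by apply: integral_ge0 => t _; rewrite lee_fin mulr_ge0 ?powR_ge0 // ltW // speed_gt0.
Qed.

Section TotalCurvature.
Context {K L : R -> R}.
Hypothesis K_primitive : forall t : R, 0 <= t -> is_derive t 1 K (`|kappa t| * s t).
Hypothesis L_primitive : forall t : R, 0 <= t -> is_derive t 1 L (s t).

Lemma le_K {a b : R} : 0 <= a -> a <= b -> K a <= K b.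
Proof.
move=> a_ge0 ab; apply: (is_derive_ge0_le K (fun t => `|kappa t| * s t) _ _ ab).
  by move=> z /andP[az _]; apply: K_primitive; apply: le_trans az.
by move=> z _; rewrite mulr_ge0 // ltW // speed_gt0.
Qed.

Lemma lt_L {a b : R} : 0 <= a -> a < b -> L a < L b.
Proof.
move=> a_ge0 ab; apply: (is_derive_gt0_lt L s _ _ ab) => [z /andP[az _]|z _].
  by apply: L_primitive; apply: le_trans az.
exact: speed_gt0.
Qed.

Lemma ivt_K (a b v : R) : 0 <= a -> a <= b -> K a <= v <= K b ->
  exists2 c, a <= c <= b & K c = v.
Proof.
move=> a_ge0 ab v_ab.
have cK : {within `[a, b], continuous K}.
  apply: derivable_within_continuous => z; rewrite in_itv => /andP[az _].
  by case: (K_primitive _ (le_trans a_ge0 az)).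
have [|c] := @IVT _ K a b v ab cK; first by rewrite min_l ?max_r ?le_K.
by rewrite in_itv => c_ab Kc; exists c.
Qed.

Lemma tangent_dist_le {m t : R} : 0 <= m -> 0 <= t ->
  (ex t - ex m) ^+ 2 + (ey t - ey m) ^+ 2 <= (K t - K m) ^+ 2.
Proof.
wlog mt : m t / m <= t.
  move=> wlog_mt m_ge0 t_ge0; have [mt|tm] := leP m t; first exact: wlog_mt.
  rewrite -(sqrrN (ex t - ex m)) -(sqrrN (ey t - ey m)) -(sqrrN (K t - K m)) !opprB.
  exact: wlog_mt (ltW tm) t_ge0 m_ge0.
(* Compare [u . e] with [|u| K] for the fixed vector [u = e t - e m]. *)
move=> m_ge0 t_ge0; set u1 := ex t - ex m; set u2 := ey t - ey m.
set N := u1 ^+ 2 + u2 ^+ 2.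
have fg : `|(u1 * ex t + u2 * ey t) - (u1 * ex m + u2 * ey m)|
    <= Num.sqrt N * K t - Num.sqrt N * K m.
  apply: (ler_normB_is_derive (fun z => u1 * ex z + u2 * ey z) (fun z => Num.sqrt N * K z)
    (fun z => kappa z * s z * (u2 * ex z + (- u1) * ey z))
    (fun z => Num.sqrt N * (`|kappa z| * s z)) _ _ mt).
  - move=> z _; apply: is_derive_eq (is_deriveD (is_deriveZ u1 (is_derive_tangent_x z))
                                                (is_deriveZ u2 (is_derive_tangent_y z))) _.
    move: (kappa z) (s z) (ex z) (ey z) => k v e1 e2.
    by rewrite /GRing.scale /=; ring.
  - by move=> z /andP[mz _]; apply: is_deriveZ; apply: K_primitive; apply: le_trans mz.
  - move=> z _; rewrite [X in _ <= X]mulrC (normrM (kappa z * s z)) (normrM (kappa z)).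
    rewrite (gtr0_norm (speed_gt0 z)); apply: ler_wpM2l.
      by rewrite mulr_ge0 // ltW // speed_gt0.
    by rewrite /N (addrC (u1 ^+ 2)) -(sqrrN u1); apply: ler_norm_dot2 (tangent_unit z).
have fE : u1 * ex t + u2 * ey t - (u1 * ex m + u2 * ey m) = N.
  by rewrite /N /u1 /u2; move: (ex t) (ex m) (ey t) (ey m) => p p' r r'; ring.
rewrite fE -mulrBr ger0_norm ?addr_ge0 ?sqr_ge0 // in fg.
have dK_ge0 : 0 <= K t - K m by rewrite subr_ge0 le_K.
have := sqr_sqrtr (addr_ge0 (sqr_ge0 u1) (sqr_ge0 u2)); rewrite -/N.
have := sqrtr_ge0 N; move: (Num.sqrt N) (K t - K m) fg dK_ge0 => r d.
nra.
Qed.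

Lemma arc_chord_ge {a b : R} : 0 <= a -> a <= b ->
  (1 - (K b - K a) ^+ 2 / 8) * (L b - L a) <= curve_dist x y b a.
Proof.
move=> a_ge0 ab; set beta := 1 - (K b - K a) ^+ 2 / 8.
have Kab := le_K a_ge0 ab.
have [m /andP[am mb] Km] := @ivt_K a b ((K a + K b) / 2) a_ge0 ab
  ltac:(apply/andP; split; lra).
have m_ge0 := le_trans a_ge0 am.
(* Halfway in total curvature, the tangent at [m] stays close to all tangents of the arc. *)
have dot_ge t : a <= t <= b -> beta <= ex m * ex t + ey m * ey t.
  case/andP=> ta tb; have t_ge0 := le_trans a_ge0 ta.
  have dK : (K t - K m) ^+ 2 <= (K b - K a) ^+ 2 / 4.
    have := le_K a_ge0 ta; have := le_K t_ge0 tb; rewrite Km.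
    move: (K a) (K b) (K t) => p r w; nra.
  have := tangent_dist_le m_ge0 t_ge0; have := tangent_unit t; have := tangent_unit m.
  rewrite /beta; move: dK; move: (K t - K m) (K b - K a) (ex m) (ex t) (ey m) (ey t).
  by move=> d A p p' r r'; nra.
pose P z := ex m * x z + ey m * y z.
have P_ge : beta * (L b - L a) <= P b - P a.
  suff : P a - beta * L a <= P b - beta * L b by lra.
  apply: (is_derive_ge0_le (fun z => P z - beta * L z)
    (fun z => s z * (ex m * ex z + ey m * ey z) - beta * s z) _ _ ab).
    move=> z /andP[az _]; apply: is_deriveB (is_derive_proj _ _ z) _.
    by apply: is_deriveZ; apply: L_primitive; apply: le_trans az.
  move=> z /andP[az zb]; rewrite (mulrC beta) -mulrBr.
  by rewrite mulr_ge0 ?(ltW (speed_gt0 z)) // subr_ge0 dot_ge // !ltW.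
apply: le_trans P_ge _; rewrite /P /curve_dist.
have -> : ex m * x b + ey m * y b - (ex m * x a + ey m * y a)
    = (x b - x a) * ex m + (y b - y a) * ey m by ring.
exact: le_trans (ler_norm _) (ler_norm_dot2 _ _ _ _ (tangent_unit m)).
Qed.

Lemma closed_total_curvature_ge {T : R} : 0 < T -> x T = x 0 -> y T = y 0 ->
  8 <= (K T - K 0) ^+ 2.
Proof.
move=> T_gt0 xT yT; have := arc_chord_ge (lexx 0) (ltW T_gt0).
rewrite /curve_dist xT yT !subrr expr0n addr0 sqrtr0 pmulr_lle0; first lra.
by rewrite subr_gt0 lt_L.
Qed.

Lemma closed_curve_arc (theta T : R) : 0 < theta -> theta ^+ 2 <= 8 ->
  0 < T -> x T = x 0 -> y T = y 0 ->
  exists b, [/\ 0 < b, b <= T, K b - K 0 = theta &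
    (1 - theta ^+ 2 / 8) * (L b - L 0) <= curve_dist x y b 0].
Proof.
move=> theta_gt0 theta_le T_gt0 xT yT.
have KT := closed_total_curvature_ge T_gt0 xT yT.
have KT_ge0 : 0 <= K T - K 0 by rewrite subr_ge0 le_K // ltW.
have [b /andP[b_ge0 bT] Kb] := @ivt_K 0 T (K 0 + theta) (lexx 0) (ltW T_gt0)
  ltac:(apply/andP; split; nra).
have b_gt0 : 0 < b.
  by rewrite lt_def b_ge0 andbT; apply/eqP => b0; move: Kb; rewrite b0; lra.
exists b; split => //; first lra.
have -> : theta = K b - K 0 by rewrite Kb addrC addKr.
exact: arc_chord_ge (lexx 0) b_ge0.
Qed.

Lemma integral_curvature_pow_ge (q D a b : R) : 1 <= q -> 0 < D -> 0 <= a -> a < b ->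
  ((D `^ (1 - q) * (q * (K b - K a) - (q - 1) / D * (L b - L a)))%:E
    <= \int[lebesgue_measure]_(t in `[a, b]) (`|kappa t| `^ q * s t)%:E)%E.
Proof.
move=> q_ge1 D_gt0 a_ge0 ab; set c := D `^ (1 - q).
pose Y t := c * q * (`|kappa t| * s t) - c * ((q - 1) / D) * s t.
have cY : continuous Y.
  move=> t; have := continuousB
    (continuousM (@cst_continuous _ _ (c * q) t) (continuous_abs_curvature_speed t))
    (continuousM (@cst_continuous _ _ (c * ((q - 1) / D)) t) (continuous_speed t)).
  exact.
have -> : (c * (q * (K b - K a) - (q - 1) / D * (L b - L a)))%:E
    = (\int[lebesgue_measure]_(t in `[a, b]) (Y t)%:E)%E.
  have dF t : a <= t <= b ->
      is_derive t 1 (fun z => c * q * K z - c * ((q - 1) / D) * L z) (Y t).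
    case/andP=> ta _; have t_ge0 := le_trans a_ge0 ta.
    exact: is_deriveB (is_deriveZ _ (K_primitive _ t_ge0)) (is_deriveZ _ (L_primitive _ t_ge0)).
  by rewrite (integral_primitive _ _ _ _ ab cY dF); congr (_%:E); ring.
have Y_le t : Y t <= `|kappa t| `^ q * s t.
  have := powR_ge_tangent (normr_ge0 (kappa t)) D_gt0 q_ge1; have := speed_gt0 t.
  rewrite /Y -/c; move: (`|kappa t| `^ q) (s t) `|kappa t| => P v k v_gt0 tangent.
  have -> : c * q * (k * v) - c * ((q - 1) / D) * v = c * (q * k - (q - 1) / D) * v by ring.
  by apply: ler_wpM2r => //; apply: ltW.
have mF := measurable_curvature_energy_density q.
have [F_fin|] := ltP (\int[lebesgue_measure]_(t in `[a, b]) (`|kappa t| `^ q * s t)%:E)%E +oo%E.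
  2: by rewrite leye_eq => /eqP ->; exact: leey.
apply: le_integral => //.
- apply: continuous_compact_integrable; first exact: segment_compact.
  exact: continuous_subspaceT.
- apply/integrableP; split; first by apply/measurable_EFinP; exact: measurable_funS mF.
  under eq_integral => t _ do rewrite gee0_abs ?lee_fin ?mulr_ge0 ?powR_ge0 ?ltW ?speed_gt0 //.
  exact: F_fin.
- by move=> t _; rewrite lee_fin.
Qed.

End TotalCurvature.

End RegularCurve.

Theorem lemmaA1 (R : realType) (q : R) (x y : R -> R) (T : R) :
  1 <= q ->
  closed_regular_C2_curve x y T ->
  ((powR (curve_diam x y) (1 - q))%:E <= curvature_energy x y T q)%E.
Proof.
move=> q_ge1 [T_gt0 [periodic [dxy [ddxy [[cx2 cy2] regular]]]]].
have dx t := (dxy t).1; have dy t := (dxy t).2.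
have ddx t := (ddxy t).1; have ddy t := (ddxy t).2.
have [xT yT] := periodic 0; rewrite add0r in xT yT.
have [K K'] := continuous_primitive _ 0 (continuous_abs_curvature_speed ddx ddy cx2 cy2 regular).
have [L L'] := continuous_primitive _ 0 (continuous_speed ddx ddy regular).
(* Any theta with theta (1 - theta^2/8) >= 1 would do. *)
have [b [b_gt0 bT Kb chord]] :=
  closed_curve_arc dx dy ddx ddy regular K' L' (13 / 10) T ltac:(lra) ltac:(lra) T_gt0 xT yT.
have energy_ge D : 0 < D ->
    ((D `^ (1 - q) * (q * (13 / 10) - (q - 1) / D * (L b - L 0)))%:E
      <= curvature_energy x y T q)%E.
  move=> D_gt0; rewrite -Kb; apply: le_trans
    (integral_curvature_pow_ge ddx ddy cx2 cy2 regular K' L' q D 0 b q_ge1 D_gt0 (lexx 0) b_gt0)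
    (integral_curvature_pow_le_energy ddx ddy cx2 cy2 regular q b T bT).
have [diam0|diam_ub] := curve_diam0_or_ub x y.
  rewrite diam0; have [q1|q_neq1] := eqVneq q 1.
    apply: le_trans _ (energy_ge 1 ltr01); rewrite q1 lee_fin !subrr !powRr0 mul0r; lra.
  by rewrite powR0 ?subr_eq0 1?eq_sym //; apply: curvature_energy_ge0.
set d := curve_diam x y in diam_ub *.
have L_gt0 : 0 < L b - L 0 by rewrite subr_gt0 (lt_L regular L' (lexx 0) b_gt0).
have Ld : L b - L 0 <= 800 / 631 * d by move: (diam_ub b 0) chord; lra.
have d_gt0 : 0 < d by lra.
apply: le_trans _ (energy_ge d d_gt0); rewrite lee_fin ler_pMr ?powR_gt0 //.
have : (q - 1) / d * (L b - L 0) <= (q - 1) * (800 / 631).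
  rewrite mulrAC -mulrA; apply: ler_wpM2l; first lra.
  by rewrite ler_pdivrMr //; lra.
lra.
Qed.
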